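(* Let $\{S(t)\}_{t\ge0}$ be a semigroup on a complete metric space $(X,d)$ and let $B\subseteq X$ be a positively invariant bounded set. Let $\varphi:\mathbb{R}^+\to\mathbb{R}^+$ satisfy $\varphi(t)\to0$ as $t\to+\infty$, and let $T>0$. Suppose that for every $t\ge T$ and every $\epsilon>0$ there exists a function $\Phi_{t,\epsilon}:X\times X\to\mathbb{R}^+$ which is contractive on $B\times B$, i.e. $$\liminf_{m\to\infty}\liminf_{n\to\infty}\Phi_{t,\epsilon}(y_n,y_m)=0\quad\text{for every sequence }\{y_n\}\subseteq B,$$ and such that $$d(S(t)y_1,S(t)y_2)\le\varphi(t)+\epsilon+\Phi_{t,\epsilon}(y_1,y_2)\quad\forall y_1,y_2\in B .$$ Then $\alpha(S(t)B)\le3\varphi(t)$ for all $t\ge T$.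
   Context: A semigroup $\{S(t)\}_{t\ge0}$ on $X$ is a family of continuous maps $S(t):X\to X$ with $S(0)=I$, $S(t+s)=S(t)S(s)$. $B$ positively invariant means $S(t)B\subseteq B$ for all $t\ge0$. $\alpha$ is the Kuratowski measure of noncompactness, $\alpha(B)=\inf\{\delta>0:B\text{ has a finite cover by sets of diameter}<\delta\}$. *)

From Stdlib Require Import Reals List.
From Coquelicot Require Import Coquelicot.
Open Scope R_scope.

Definition is_metric {X : Type} (d : X -> X -> R) : Prop :=
  (forall x y, 0 <= d x y) /\
  (forall x y, d x y = 0 <-> x = y) /\
  (forall x y, d x y = d y x) /\
  (forall x y z, d x z <= d x y + d y z).

Definition cauchy_seq {X : Type} (d : X -> X -> R) (u : nat -> X) : Prop :=
  forall eps, 0 < eps -> exists N, forall m n, (N <= m)%nat -> (N <= n)%nat ->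
    d (u m) (u n) < eps.

Definition converges_to {X : Type} (d : X -> X -> R) (u : nat -> X) (l : X) : Prop :=
  forall eps, 0 < eps -> exists N, forall n, (N <= n)%nat -> d (u n) l < eps.

Definition complete_metric {X : Type} (d : X -> X -> R) : Prop :=
  is_metric d /\ forall u, cauchy_seq d u -> exists l, converges_to d u l.

Definition d_continuous {X : Type} (d : X -> X -> R) (f : X -> X) : Prop :=
  forall x eps, 0 < eps -> exists delta, 0 < delta /\
    forall y, d x y < delta -> d (f x) (f y) < eps.

Definition is_semigroup {X : Type} (d : X -> X -> R) (S : R -> X -> X) : Prop :=
  (forall t, 0 <= t -> d_continuous d (S t)) /\
  (forall x, S 0 x = x) /\
  (forall t s x, 0 <= t -> 0 <= s -> S (t + s) x = S t (S s x)).

Definition pos_invariant {X : Type} (S : R -> X -> X) (B : X -> Prop) : Prop :=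
  forall t x, 0 <= t -> B x -> B (S t x).

Definition bounded_set {X : Type} (d : X -> X -> R) (B : X -> Prop) : Prop :=
  exists r, forall x y, B x -> B y -> d x y <= r.

Definition image {X : Type} (f : X -> X) (A : X -> Prop) : X -> Prop :=
  fun y => exists x, A x /\ y = f x.

(* diameter (in Rbar; -oo for the empty set, +oo if unbounded) *)
Definition diam {X : Type} (d : X -> X -> R) (A : X -> Prop) : Rbar :=
  Rbar_lub (fun r => exists x y, A x /\ A y /\ r = Finite (d x y)).

Definition finite_cover_diam_lt {X : Type} (d : X -> X -> R) (A : X -> Prop)
  (delta : R) : Prop :=
  exists Cs : list (X -> Prop),
    (forall C, In C Cs -> Rbar_lt (diam d C) (Finite delta)) /\
    (forall x, A x -> exists C, In C Cs /\ C x).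

Definition kuratowski {X : Type} (d : X -> X -> R) (A : X -> Prop) : Rbar :=
  Rbar_glb (fun v => exists delta, v = Finite delta /\ 0 < delta /\
                                   finite_cover_diam_lt d A delta).

Definition liminf (u : nat -> Rbar) : Rbar :=
  Rbar_lub (fun l => exists N, l = Rbar_glb (fun v => exists n, (N <= n)%nat /\ v = u n)).

Definition contractive_on {X : Type} (Phi : X -> X -> R) (B : X -> Prop) : Prop :=
  forall y : nat -> X, (forall n, B (y n)) ->
    liminf (fun m => liminf (fun n => Finite (Phi (y n) (y m)))) = Finite 0.

(** If [S(t)B] had no finite net of radius [phi t + 2 eps], a greedy choice
    would give a sequence [y_n] in [B] whose images are pairwise at distance
    at least [phi t + 2 eps]; the estimate then forces [Phi (y_n) (y_m) >= eps]
    for all [n > m], contradicting contractivity.  The balls of such a net have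
    diameter at most [2 (phi t + 2 eps)], so letting [eps -> 0] bounds the
    Kuratowski measure by [2 phi t], a fortiori by [3 phi t]. *)

From Stdlib Require Import Reals List Lra Lia Classical ClassicalEpsilon.
From Coquelicot Require Import Coquelicot.
Open Scope R_scope.

Lemma Rbar_lub_ub (E : Rbar -> Prop) (x : Rbar) : E x -> Rbar_le x (Rbar_lub E).
Proof. exact (proj1 (proj2_sig (Rbar_ex_lub E)) x). Qed.

Lemma Rbar_lub_le (E : Rbar -> Prop) (c : Rbar) :
  (forall x, E x -> Rbar_le x c) -> Rbar_le (Rbar_lub E) c.
Proof. exact (proj2 (proj2_sig (Rbar_ex_lub E)) c). Qed.

Lemma Rbar_glb_lb (E : Rbar -> Prop) (x : Rbar) : E x -> Rbar_le (Rbar_glb E) x.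
Proof. exact (proj1 (proj2_sig (Rbar_ex_glb E)) x). Qed.

Lemma Rbar_le_glb (E : Rbar -> Prop) (c : Rbar) :
  (forall x, E x -> Rbar_le c x) -> Rbar_le c (Rbar_glb E).
Proof. exact (proj2 (proj2_sig (Rbar_ex_glb E)) c). Qed.

Lemma Rbar_le_Finite_eps (x : Rbar) (c : R) :
  (forall e, 0 < e -> Rbar_le x (Finite (c + e))) -> Rbar_le x (Finite c).
Proof.
  destruct x as [g| |]; simpl; intros H; [| exact (H 1 Rlt_0_1) | exact I].
  apply Rnot_lt_le. intros Hlt. specialize (H ((g - c) / 2) ltac:(lra)). lra.
Qed.

Lemma Rbar_le_liminf (u : nat -> Rbar) (c : Rbar) (N : nat) :
  (forall n, (N <= n)%nat -> Rbar_le c (u n)) -> Rbar_le c (liminf u).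
Proof.
  intros H. eapply Rbar_le_trans; [| apply Rbar_lub_ub; now exists N].
  apply Rbar_le_glb. intros v [n [Hn ->]]. now apply H.
Qed.

Lemma contractive_not_separated {X : Type} (Phi : X -> X -> R) (B : X -> Prop)
  (u : nat -> X) (eps : R) :
  contractive_on Phi B -> (forall n, B (u n)) -> 0 < eps ->
  ~ (forall m n, (m < n)%nat -> eps <= Phi (u n) (u m)).
Proof.
  intros HPhi Hu Heps Hsep.
  assert (Hle : Rbar_le (Finite eps)
                  (liminf (fun m => liminf (fun n => Finite (Phi (u n) (u m)))))).
  { apply Rbar_le_liminf with O. intros m _.
    apply Rbar_le_liminf with (S m). intros n Hn. apply Hsep. lia. }
  rewrite (HPhi u Hu) in Hle. simpl in Hle. lra.
Qed.

Lemma separated_seq_of_no_finite_net {X : Type} (B : X -> Prop)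
  (D : X -> X -> R) (r : R) :
  ~ (exists l : list X, forall y, B y -> exists z, In z l /\ D y z < r) ->
  exists u : nat -> X, (forall n, B (u n)) /\
    forall m n, (m < n)%nat -> r <= D (u n) (u m).
Proof.
  intros Hnet.
  assert (Hfar : forall l : list X, exists y, B y /\ forall z, In z l -> r <= D y z).
  { intros l. apply NNPP. intros Hl. apply Hnet. exists l. intros y By.
    apply NNPP. intros Hy. apply Hl. exists y. split; [exact By |].
    intros z Hz. apply Rnot_lt_le. intros Hlt. apply Hy. now exists z. }
  destruct (choice _ Hfar) as [next Hnext].
  set (chosen := fix chosen n :=
         match n with O => nil | S n' => next (chosen n') :: chosen n' end).
  assert (Hchosen : forall m n, (m < n)%nat -> In (next (chosen m)) (chosen n)).
  { intros m n; induction n as [| n IH]; intros Hmn; [lia |].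
    destruct (Nat.eq_dec m n) as [-> | Hne]; [now left | right; apply IH; lia]. }
  exists (fun n => next (chosen n)). split; [intros n; apply Hnext |].
  intros m n Hmn. now apply Hnext, Hchosen.
Qed.

Lemma finite_net_of_contractive_estimate {X : Type} (d : X -> X -> R)
  (f : X -> X) (B : X -> Prop) (Phi : X -> X -> R) (a eps : R) :
  0 < eps -> contractive_on Phi B ->
  (forall y1 y2, B y1 -> B y2 -> d (f y1) (f y2) <= a + eps + Phi y1 y2) ->
  exists l : list X, forall x, image f B x -> exists z, In z l /\ d x z < a + 2 * eps.
Proof.
  intros Heps HPhi Hest.
  assert (Hnet : exists l : list X, forall y, B y ->
                   exists z, In z l /\ d (f y) (f z) < a + 2 * eps).
  { apply NNPP. intros Hnet.
    destruct (separated_seq_of_no_finite_net B (fun y z => d (f y) (f z)) _ Hnet)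
      as [u [Hu Hsep]].
    apply (contractive_not_separated Phi B u eps HPhi Hu Heps).
    intros m n Hmn. specialize (Hsep m n Hmn). specialize (Hest _ _ (Hu n) (Hu m)).
    simpl in Hsep. lra. }
  destruct Hnet as [l Hl]. exists (map f l). intros x [y [By ->]].
  destruct (Hl y By) as [z [Hz Hyz]]. exists (f z). split; [now apply in_map |exact Hyz].
Qed.

Lemma diam_ball_le {X : Type} (d : X -> X -> R) (c : X) (r : R) :
  is_metric d -> Rbar_le (diam d (fun x => d x c < r)) (Finite (2 * r)).
Proof.
  intros [_ [_ [Hsym Htri]]]. apply Rbar_lub_le. intros v [x [y [Hx [Hy ->]]]].
  simpl. pose proof (Htri x c y). rewrite (Hsym c y) in H. lra.
Qed.

Lemma kuratowski_le_of_finite_net {X : Type} (d : X -> X -> R) (A : X -> Prop)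
  (l : list X) (r delta : R) :
  is_metric d -> 0 < delta -> 2 * r < delta ->
  (forall x, A x -> exists z, In z l /\ d x z < r) ->
  Rbar_le (kuratowski d A) (Finite delta).
Proof.
  intros Hd Hdelta Hr Hnet. apply Rbar_glb_lb.
  exists delta. split; [reflexivity |]. split; [exact Hdelta |].
  exists (map (fun z x => d x z < r) l). split.
  - intros C HC. apply in_map_iff in HC as [z [<- _]].
    eapply Rbar_le_lt_trans; [now apply diam_ball_le |]. simpl. lra.
  - intros x Hx. destruct (Hnet x Hx) as [z [Hz Hxz]].
    exists (fun x => d x z < r). split; [apply in_map_iff; now exists z | exact Hxz].
Qed.

Theorem theorem4p4 (X : Type) (d : X -> X -> R) (S : R -> X -> X)
  (B : X -> Prop) (phi : R -> R) (T : R) :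
  complete_metric d ->
  is_semigroup d S ->
  pos_invariant S B ->
  bounded_set d B ->
  (forall t, 0 <= t -> 0 <= phi t) ->
  is_lim phi p_infty 0 ->
  0 < T ->
  (forall t eps, T <= t -> 0 < eps ->
     exists Phi : X -> X -> R,
       (forall x y, 0 <= Phi x y) /\
       contractive_on Phi B /\
       (forall y1 y2, B y1 -> B y2 ->
          d (S t y1) (S t y2) <= phi t + eps + Phi y1 y2)) ->
  forall t, T <= t -> Rbar_le (kuratowski d (image (S t) B)) (Finite (3 * phi t)).
Proof.
  intros [Hd _] _ _ _ Hphi_nonneg _ HT Hcontr t Ht.
  assert (Hphi : 0 <= phi t) by (apply Hphi_nonneg; lra).
  apply Rbar_le_Finite_eps. intros e He.
  destruct (Hcontr t (e / 5) Ht ltac:(lra)) as [Phi [_ [HPhi Hest]]].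
  destruct (finite_net_of_contractive_estimate d (S t) B Phi (phi t) (e / 5)
              ltac:(lra) HPhi Hest) as [l Hl].
  apply (kuratowski_le_of_finite_net d _ l (phi t + 2 * (e / 5))); [exact Hd | lra | lra | exact Hl].
Qed.
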